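(* Let $\kappa>0$ be a cardinal, $K$ a field, and $R$ the $K$-algebra $K^\kappa$ (direct product of $\kappa$ copies of $K$). If $\kappa$ is finite, then $R$ has a strong multiplicative basis; if $\kappa$ is infinite, then $R$ has no bounded basis.
   Context: Let $B$ be a $K$-linear basis of a $K$-algebra $R$. For $r\in R$ write $r=\sum_{b\in B} b k_b$ and let $\mathrm{supp}(r)=\{b\mid k_b\neq 0\}$, $\mathrm{cs}(r)=|\mathrm{supp}(r)|$. For $1\le k<\omega$, $B$ is $k$-bounded if $\mathrm{cs}(bb')\le k$ for all $b,b'\in B$; $B$ is bounded if it is $k$-bounded for some $1 \le k<\omega$. $B$ is a strong multiplicative basis if $bb'\in B$ for all $b,b'\in B$. *)

(* The K-algebra K^kappa is modelled as the type of all
   functions I -> K (pointwise operations), where I is a type of cardinality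
   kappa. *)
From mathcomp Require Import all_boot all_order all_algebra.
Set Implicit Arguments. Unset Strict Implicit. Unset Printing Implicit Defensive.
Import GRing.Theory.
Local Open Scope ring_scope.

Section Defs.
Variables (K : fieldType) (I : Type).

Definition fmul (f g : I -> K) : I -> K := fun x => f x * g x.

Definition lincomb (n : nat) (c : nat -> K) (s : nat -> I -> K) : I -> K :=
  fun x => \sum_(i < n) c i * s i x.

Definition distinct_in (B : (I -> K) -> Prop) (n : nat) (s : nat -> I -> K) :=
  (forall i, (i < n)%N -> B (s i)) /\
  (forall i j, (i < n)%N -> (j < n)%N -> s i = s j -> i = j).

Definition lin_indep (B : (I -> K) -> Prop) :=
  forall n c s, distinct_in B n s -> lincomb n c s = (fun _ => 0) ->
  forall i, (i < n)%N -> c i = 0.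
Definition spanning (B : (I -> K) -> Prop) :=
  forall r, exists n c s, distinct_in B n s /\ r = lincomb n c s.
Definition is_basis (B : (I -> K) -> Prop) := lin_indep B /\ spanning B.

(* r = sum_{i<n} c_i s_i is the expansion of r in B: the s_i are distinct
   elements of B and the k_b = c_i are nonzero, so supp(r) = {s_0..s_{n-1}} *)
Definition expansion (B : (I -> K) -> Prop) (r : I -> K) n c s :=
  distinct_in B n s /\ (forall i, (i < n)%N -> c i != 0) /\ r = lincomb n c s.

Definition cs_le (B : (I -> K) -> Prop) (r : I -> K) (k : nat) :=
  forall n c s, expansion B r n c s -> (n <= k)%N.

Definition k_bounded (B : (I -> K) -> Prop) (k : nat) :=
  forall b b', B b -> B b' -> cs_le B (fmul b b') k.
Definition bounded_basis (B : (I -> K) -> Prop) :=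
  exists k, (1 <= k)%N /\ k_bounded B k.
Definition strong_multiplicative (B : (I -> K) -> Prop) :=
  forall b b', B b -> B b' -> B (fmul b b').

Definition finite_type := exists n (f : 'I_n -> I), forall x, exists i, f i = x.
End Defs.

(* For finite I, enumerate I as x_0, ..., x_(m-1).  The indicators of the initial
   segments {x_0, ..., x_(k-1)}, 0 < k <= m, form a triangular basis of K^I, and the
   product of two of them is the indicator of the shorter segment.

   For infinite I, suppose B is a k-bounded basis, so that cs(r s) <= k cs(r) cs(s).
   A D-dimensional subspace always contains an element of B-support at least D: its
   coefficient matrix over B has rank D, hence an invertible D x D minor, and some
   combination of its rows is 1 on the D corresponding columns.  Split a countable
   part of I into infinitely many disjoint infinite blocks P_n with indicators s_n,
   pick g_n supported on P_n with cs(g_n) > k n cs(s_n), and glue the g_n into a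
   single r.  For m = cs(r) we get g_m = r s_m, whence cs(g_m) <= k m cs(s_m). *)

From mathcomp Require Import all_boot all_order all_algebra.
From mathcomp Require Import boolp zify.
Set Implicit Arguments. Unset Strict Implicit. Unset Printing Implicit Defensive.
Import GRing.Theory.
Local Open Scope ring_scope.

Section Staircase.
Variables (K : fieldType) (I : Type) (m : nat) (idx : I -> nat) (pt : nat -> I).
Hypotheses (idx_lt : forall x, (idx x < m)%N) (idx_pt : forall i, (i < m)%N -> idx (pt i) = i)
  (pt_idx : forall x, pt (idx x) = x).

Definition step k : I -> K := fun x => (idx x < k)%:R.
Definition staircase (b : I -> K) := exists2 k, (0 < k <= m)%N & b = step k.

Lemma step_pt k i : (i < m)%N -> step k (pt i) = (i < k)%:R.
Proof. by move=> im; rewrite /step idx_pt. Qed.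

Lemma fmul_step j k : fmul (step j) (step k) = step (minn j k).
Proof. by apply: funext => x; rewrite /fmul /step leq_min -natrM mulnb. Qed.

Lemma step_inj j k : (j <= m)%N -> (k <= m)%N -> step j = step k -> j = k.
Proof.
move=> jm km jk; have jk_at i : (i < m)%N -> (i < j)%N = (i < k)%N.
  move=> im; have := congr1 (fun g => g (pt i)) jk; rewrite /= !step_pt //.
  by case: (i < j)%N; case: (i < k)%N => //= /eqP; rewrite ?oner_eq0 // eq_sym oner_eq0.
case: (ltngtP j k) => // [jk'|kj].
  by have := jk_at j (leq_trans jk' km); rewrite ltnn jk'.
by have := jk_at k (leq_trans kj jm); rewrite ltnn kj.
Qed.

Lemma staircase_strong_multiplicative : strong_multiplicative staircase.
Proof.
move=> _ _ [j /andP[j0 jm] ->] [k /andP[k0 km] ->]; rewrite fmul_step.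
by exists (minn j k) => //; rewrite leq_min j0 k0 geq_min jm.
Qed.

Lemma staircase_spanning : spanning staircase.
Proof.
move=> r; pose a i := if (i < m)%N then r (pt i) else 0.
exists m, (fun i => a i - a i.+1), (fun i => step i.+1); split.
  split=> [i im|i j im jm /step_inj]; first by exists i.+1.
  by move=> /(_ im jm) [].
apply: funext => x; rewrite /lincomb.
rewrite -(big_mkord xpredT (fun i => (a i - a i.+1) * step i.+1 x)).
rewrite (big_cat_nat (n := idx x)) //= ?(ltnW (idx_lt x)) // big1_seq ?add0r; last first.
  move=> i; rewrite mem_index_iota => /andP[_ /andP[_ lt]].
  by rewrite /step ltnS leqNgt lt mulr0.
rewrite big_seq (eq_bigr (fun i => - (a i.+1 - a i))); last first.
  by move=> i; rewrite mem_index_iota => /andP[le _]; rewrite /step ltnS le mulr1 opprB.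
rewrite -big_seq sumrN telescope_sumr ?(ltnW (idx_lt x)) //.
by rewrite opprB /a ltnn subr0 idx_lt pt_idx.
Qed.

Lemma staircase_lin_indep : lin_indep staircase.
Proof.
move=> n c s [sB s_inj] s0 i il.
have /choice[kk kkP] i' : exists k, (i' < n)%N -> (0 < k <= m)%N /\ s i' = step k.
  by case: (ltnP i' n) => [/sB[k km ->]|_]; [exists k | exists 0%N].
(* Evaluating at [pt k] shows that the coefficients of the steps longer than k sum
   to 0, and c_i is the difference of two such sums. *)
have tail k : \sum_(j < n | (k < kk j)%N) c j = 0.
  case: (ltnP k m) => [km|mk].
    rewrite -[RHS](congr1 (fun g => g (pt k)) s0) /lincomb big_mkcond; apply: eq_bigr => j _.
    by rewrite (kkP j (ltn_ord j)).2 step_pt //; case: ifP; rewrite ?mulr1 ?mulr0.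
  rewrite big1 // => j; have /andP[_ jm] := (kkP j (ltn_ord j)).1.
  by rewrite ltnNge (leq_trans jm mk).
have [/andP[ki0 _] si] := kkP i il.
have split_tail : \sum_(j < n | ((kk i).-1 < kk j)%N) c j =
    \sum_(j < n | kk j == kk i) c j + \sum_(j < n | (kk i < kk j)%N) c j.
  rewrite (bigID (fun j : 'I_n => kk j == kk i)) /=.
  congr (_ + _); apply: eq_bigl => j.
    by case: eqP => [->|]; rewrite ?andbT ?andbF //; lia.
  by case: eqP => [->|]; rewrite ?andbT ?andbF ?ltnn //; lia.
have := tail (kk i).-1; rewrite split_tail tail addr0.
rewrite (bigD1 (Ordinal il)) ?eqxx //= big1 ?addr0 // => j /andP[/eqP kj ji].
have := (kkP j (ltn_ord j)).2; rewrite kj -si => /(s_inj _ _ (ltn_ord j) il) e.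
by move: ji; rewrite -(inj_eq val_inj) /= e eqxx.
Qed.

End Staircase.

Lemma finite_type_indexing (I : Type) (x0 : I) : finite_type I ->
  exists m (idx : I -> nat) (pt : nat -> I), [/\ forall x, (idx x < m)%N,
    forall i, (i < m)%N -> idx (pt i) = i & forall x, pt (idx x) = x].
Proof.
case=> n [f f_surj]; set s := undup [seq (f i : {classic I}) | i <- enum 'I_n].
have s_full (x : {classic I}) : x \in s.
  by have [i <-] := f_surj x; rewrite mem_undup map_f ?mem_enum.
exists (size s), (fun x => index (x : {classic I}) s), (nth x0 s); split=> [x|i i_s|x].
- by rewrite index_mem.
- by rewrite index_uniq ?undup_uniq.
- exact: (@nth_index {classic I} x0 x s).
Qed.

Lemma finite_strong_multiplicative_basis (K : fieldType) (I : Type) : inhabited I ->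
  finite_type I -> exists B : (I -> K) -> Prop, is_basis B /\ strong_multiplicative B.
Proof.
case=> x0 /(finite_type_indexing x0)[m [idx [pt [idx_lt idx_pt pt_idx]]]].
exists (@staircase K I m idx); split; first split.
- exact: staircase_lin_indep idx_pt.
- exact: staircase_spanning idx_lt idx_pt pt_idx.
- exact: staircase_strong_multiplicative.
Qed.

Section FormalCombinations.
Variables (K : fieldType) (I : Type).
Local Notation F := (I -> K).
Implicit Types (l : seq (K * F)) (B : F -> Prop) (b : F) (a : K).

(* Finite formal combinations sum_i c_i b_i, as lists of pairs (c_i, b_i); unlike in an
   [expansion], vectors may repeat and coefficients may vanish. *)
Definition combine l : F := fun x => \sum_(p <- l) p.1 * p.2 x.
Definition on_basis B l := forall p, p \in l -> B p.2.
Definition coef l b : K := \sum_(p <- l | p.2 == b) p.1.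
Definition scale a l := [seq (a * p.1, p.2) | p <- l].

Lemma on_basis_cat B l1 l2 : on_basis B l1 -> on_basis B l2 -> on_basis B (l1 ++ l2).
Proof. by move=> h1 h2 p; rewrite mem_cat => /orP[/h1|/h2]. Qed.

Lemma on_basis_consP B p l : on_basis B (p :: l) -> B p.2 /\ on_basis B l.
Proof.
by move=> h; split; [|move=> q ql]; apply: h; rewrite inE ?eqxx ?ql ?orbT.
Qed.

Lemma on_basis_scale B a l : on_basis B l -> on_basis B (scale a l).
Proof. by move=> h p /mapP[q ql ->]; exact: h q ql. Qed.

Lemma combine_cat l1 l2 : combine (l1 ++ l2) = fun x => combine l1 x + combine l2 x.
Proof. by apply: funext => x; rewrite /combine big_cat. Qed.

Lemma combine_scale a l : combine (scale a l) = fun x => a * combine l x.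
Proof.
apply: funext => x; rewrite /combine big_map mulr_sumr.
by apply: eq_bigr => p _; rewrite mulrA.
Qed.

Lemma coef_scale a l b : coef (scale a l) b = a * coef l b.
Proof. by rewrite /coef big_map mulr_sumr. Qed.

Lemma coef_cons p l b : coef (p :: l) b = (if b == p.2 then p.1 else 0) + coef l b.
Proof. by rewrite /coef big_cons eq_sym; case: eqP; rewrite ?add0r. Qed.

Lemma coef_notin l b : b \notin map snd l -> coef l b = 0.
Proof.
move=> bNl; rewrite /coef big_seq_cond big1 // => p /andP[pl /eqP pb].
by move: bNl; rewrite -pb map_f.
Qed.

Lemma combine_coef l (u : seq F) : uniq u -> {subset map snd l <= u} ->
  combine l = fun x => \sum_(b <- u) coef l b * b x.
Proof.
move=> uu lu; apply: funext => x; elim: l lu => [|p l IH] lu.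
  by rewrite /combine big_nil big1 // => b _; rewrite /coef big_nil mul0r.
have pu : p.2 \in u by apply: lu; rewrite inE eqxx.
rewrite /combine big_cons [X in _ + X = _]IH => [|y yl]; last first.
  by apply: lu; rewrite inE yl orbT.
under [RHS]eq_bigr => b _ do rewrite coef_cons mulrDl.
rewrite big_split /=; congr (_ + _).
rewrite (bigD1_seq p.2) //= eqxx big1 ?addr0 // => b /negPf ->.
by rewrite mul0r.
Qed.

Lemma lincomb_combine n c s : lincomb n c s = combine [seq (c i, s i) | i <- iota 0 n].
Proof.
apply: funext => x; rewrite /lincomb /combine big_map.
by rewrite -(big_mkord xpredT (fun i => c i * s i x)) /index_iota subn0.
Qed.

Lemma spanning_combine B : spanning B -> forall r, exists l, on_basis B l /\ r = combine l.
Proof.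
move=> spanB r; have [n [c [s [[sB _] ->]]]] := spanB r.
exists [seq (c i, s i) | i <- iota 0 n]; split; last exact: lincomb_combine.
by move=> p /mapP[i]; rewrite mem_iota => /andP[_ /sB] ? ->.
Qed.

Lemma lin_indep_coef0 B l : lin_indep B -> on_basis B l -> combine l = (fun=> 0) ->
  forall b, coef l b = 0.
Proof.
move=> indB lB l0 b; set u := undup (map snd l).
have uu : uniq u by apply: undup_uniq.
have lu : {subset map snd l <= u} by move=> y; rewrite mem_undup.
have [bu|] := boolP (b \in u); last by move/(contra (lu b)); apply: coef_notin.
have distinct_u : distinct_in B (size u) (nth (fun=> 0) u).
  split=> [i iu|i j iu ju /eqP]; last by rewrite nth_uniq // => /eqP.
  have /mapP[p pl ->] : nth (fun=> 0) u i \in map snd l by rewrite -mem_undup mem_nth.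
  exact: lB p pl.
have := indB _ (fun i => coef l (nth (fun=> 0) u i)) _ distinct_u _ (index b u).
rewrite nth_index // index_mem; apply=> //.
rewrite -[RHS]l0 (combine_coef uu lu).
by apply: funext => x; rewrite /lincomb (big_nth (fun=> 0)) big_mkord.
Qed.

Lemma lin_indep_coef_mem B l l' b : lin_indep B -> on_basis B l -> on_basis B l' ->
  combine l = combine l' -> coef l' b != 0 -> b \in map snd l.
Proof.
move=> indB lB l'B ll' l'b; apply: contraNT l'b => /coef_notin lb.
have l0 : combine (l ++ scale (-1) l') = (fun=> 0).
  by apply: funext => x; rewrite combine_cat combine_scale ll' mulN1r subrr.
have := lin_indep_coef0 indB (on_basis_cat lB (on_basis_scale l'B)) l0 b.
by rewrite {1}/coef big_cat /= -/(coef l b) -/(coef (scale (-1) l') b) coef_scale lb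
  add0r mulN1r => /eqP; rewrite oppr_eq0.
Qed.

Lemma lin_indep_size_ge B l l' (bs : seq F) : lin_indep B -> on_basis B l -> on_basis B l' ->
  combine l = combine l' -> uniq bs -> {in bs, forall b, coef l' b != 0} ->
  (size bs <= size l)%N.
Proof.
move=> indB lB l'B ll' ubs bsl'; rewrite -(size_map snd l).
by apply: uniq_leq_size => // b /bsl' /(lin_indep_coef_mem indB lB l'B ll').
Qed.

End FormalCombinations.

Section BoundedProducts.
Variables (K : fieldType) (I : Type) (B : (I -> K) -> Prop) (k : nat).
Hypotheses (spanB : spanning B) (boundB : k_bounded B k).

Lemma k_bounded_fmul_basis u v : B u -> B v ->
  exists l, [/\ on_basis B l, (size l <= k)%N & fmul u v = combine l].
Proof.
move=> Bu Bv; have [n [c [s [[sB s_inj] uv]]]] := spanB (fmul u v).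
set js := [seq i <- iota 0 n | c i != 0].
have jsP j : (j < size js)%N -> (nth 0 js j < n)%N /\ c (nth 0 js j) != 0.
  by move=> jl; have := mem_nth 0%N jl; rewrite mem_filter mem_iota => /andP[-> /andP[]].
have js_uniq : uniq js by rewrite filter_uniq // iota_uniq.
have uv_js : fmul u v = combine [seq (c i, s i) | i <- js].
  rewrite uv lincomb_combine; apply: funext => x; rewrite /combine !big_map big_filter.
  by rewrite [RHS]big_mkcond; apply: eq_bigr => i _; case: eqP => [->|]; rewrite ?mul0r.
exists [seq (c i, s i) | i <- js]; split => //.
  by move=> p /mapP[i]; rewrite mem_filter mem_iota => /andP[_ /andP[_ /sB]] ? ->.
rewrite size_map; apply: (boundB Bu Bv (c := c \o nth 0%N js) (s := s \o nth 0%N js)).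
split; [split|split] => [j /jsP[/sB]//|i j il jl /s_inj|j /jsP[]//|].
- have [i_n _] := jsP i il; have [j_n _] := jsP j jl.
  by move=> /(_ i_n j_n) /eqP; rewrite nth_uniq // => /eqP.
- rewrite uv_js; apply: funext => x; rewrite /combine /lincomb big_map.
  by rewrite (big_nth 0%N) big_mkord.
Qed.

Lemma k_bounded_fmul_basis_combine u l2 : B u -> on_basis B l2 ->
  exists l, [/\ on_basis B l, (size l <= k * size l2)%N & fmul u (combine l2) = combine l].
Proof.
move=> Bu; elim: l2 => [_|q l2 IH /on_basis_consP[Bq /IH[l [lB lk ul2]]]].
  by exists [::]; split=> //; apply: funext => x; rewrite /fmul /combine !big_nil mulr0.
have [lq [lqB lqk uq]] := k_bounded_fmul_basis Bu Bq.
exists (scale q.1 lq ++ l); split; first exact: on_basis_cat (on_basis_scale _) lB.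
  by rewrite size_cat size_map mulnS leq_add.
apply: funext => x; rewrite combine_cat combine_scale -uq -ul2.
by rewrite /fmul /combine big_cons mulrDr mulrCA.
Qed.

Lemma k_bounded_fmul_combine l1 l2 : on_basis B l1 -> on_basis B l2 ->
  exists l, [/\ on_basis B l, (size l <= k * size l1 * size l2)%N &
    fmul (combine l1) (combine l2) = combine l].
Proof.
move=> + l2B; elim: l1 => [_|p l1 IH /on_basis_consP[Bp /IH[l [lB lk l12]]]].
  by exists [::]; split=> //; apply: funext => x; rewrite /fmul /combine !big_nil mul0r.
have [lp [lpB lpk pl2]] := k_bounded_fmul_basis_combine Bp l2B.
exists (scale p.1 lp ++ l); split; first exact: on_basis_cat (on_basis_scale _) lB.
  by rewrite size_cat size_map mulnS mulnDl leq_add.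
apply: funext => x; rewrite combine_cat combine_scale -pl2 -l12.
by rewrite /fmul /combine big_cons mulrDl mulrA.
Qed.

End BoundedProducts.

Lemma row_free_combination_ones (K : fieldType) D N (A : 'M[K]_(D, N)) : row_free A ->
  exists v : 'rV_D, exists2 f : 'I_D -> 'I_N, injective f & forall i, (v *m A) 0 (f i) = 1.
Proof.
move=> freeA; have fullAT : row_full A^T by rewrite /row_full mxrank_tr.
set f := fullrankfun fullAT; set C := rowsub f A^T.
have C_unit : C \in unitmx by rewrite -row_free_unit fullrowsub_free.
exists (invmx C *m (const_mx 1 : 'cV_D))^T, f => [|i]; first exact: fullrankfun_inj.
have : (C *m (invmx C *m (const_mx 1 : 'cV_D))) i 0 = 1 by rewrite mulmxA mulmxV // mul1mx mxE.
rewrite !mxE => h; apply: (etrans _ h); apply: eq_bigr => j _; by rewrite /C !mxE mulrC.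
Qed.

Section WideElements.
Variables (K : fieldType) (I : Type) (B : (I -> K) -> Prop).
Hypotheses (indB : lin_indep B) (spanB : spanning B).
Local Notation F := (I -> K).

Lemma spanning_common_support D (h : 'I_D -> F) :
  exists N (b : 'I_N -> F) (a : 'I_D -> 'I_N -> K), [/\ injective b, forall j, B (b j) &
    forall i, h i = fun y => \sum_j a i j * b j y].
Proof.
have [L hL] := choice (fun i => spanning_combine spanB (h i)).
set S := undup (flatten [seq map snd (L i) | i <- enum 'I_D]).
have LS i : {subset map snd (L i) <= S}.
  move=> y yL; rewrite mem_undup; apply/flattenP.
  by exists (map snd (L i)) => //; apply: map_f; rewrite mem_enum.
exists (size S), (fun j => nth (fun=> 0) S j), (fun i j => coef (L i) (nth (fun=> 0) S j)).
split.
- by move=> j j' /eqP; rewrite nth_uniq ?undup_uniq // => /eqP /val_inj.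
- move=> j; have := mem_nth (fun=> 0) (ltn_ord j); rewrite mem_undup.
  by case/flattenP=> _ /mapP[i _ ->] /mapP[p /(proj1 (hL i)) Bp ->].
- move=> i; have [_ ->] := hL i; rewrite (combine_coef (undup_uniq _) (LS i)).
  by apply: funext => y; rewrite (big_nth (fun=> 0)) big_mkord.
Qed.

Lemma coef_map_inj N (b : 'I_N -> F) (w : 'I_N -> K) j : injective b ->
  coef [seq (w j', b j') | j' <- enum 'I_N] (b j) = w j.
Proof.
move=> b_inj; rewrite /coef big_map big_enum_cond /=.
by rewrite (eq_bigl (pred1 j)) ?big_pred1_eq // => j'; rewrite /= (inj_eq b_inj).
Qed.

Lemma free_family_wide_combination D (h : 'I_D -> F) :
  (forall v : 'rV_D, (fun y => \sum_i v 0 i * h i y) = (fun=> 0) -> v = 0) ->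
  exists v : 'rV_D, forall l, on_basis B l ->
    combine l = (fun y => \sum_i v 0 i * h i y) -> (D <= size l)%N.
Proof.
move=> h_free; have [N [b [a [b_inj Bb hE]]]] := spanning_common_support h.
pose A : 'M[K]_(D, N) := \matrix_(i, j) a i j.
pose lv (v : 'rV_D) := [seq ((v *m A) 0 j, b j) | j <- enum 'I_N].
have lvE (v : 'rV_D) : (fun y => \sum_i v 0 i * h i y) = combine (lv v).
  apply: funext => y; rewrite /combine big_map big_enum /=.
  under eq_bigr => i _ do rewrite hE mulr_sumr.
  rewrite exchange_big; apply: eq_bigr => j _; rewrite !mxE mulr_suml.
  by apply: eq_bigr => i _; rewrite mxE mulrA.
have A_free : row_free A.
  apply: inj_row_free => v vA0; apply: h_free; rewrite lvE; apply: funext => y.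
  by rewrite /combine big_map big1 // => j _; rewrite vA0 mxE mul0r.
have [v [f f_inj vAf]] := row_free_combination_ones A_free.
exists v => l lB lv_l.
have <- : size [seq b (f i) | i <- enum 'I_D] = D by rewrite size_map size_enum_ord.
apply: (@lin_indep_size_ge _ _ B l (lv v)) => //.
- by move=> p; rewrite /lv => /mapP[j _ ->]; apply: Bb.
- by rewrite lv_l lvE.
- by rewrite map_inj_uniq ?enum_uniq // => i i' /b_inj /f_inj.
- by move=> _ /mapP[i _ ->]; rewrite /= coef_map_inj // vAf oner_eq0.
Qed.

Lemma wide_element_on_points D (x : 'I_D -> I) : injective x ->
  exists g : F, (forall y, g y != 0 -> exists i, y = x i) /\
    forall l, on_basis B l -> combine l = g -> (D <= size l)%N.
Proof.
move=> x_inj; pose delta i : F := fun y => if `[< y = x i >] then 1 else 0.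
have delta_x i i' : delta i (x i') = (i' == i)%:R.
  by rewrite /delta; case: asboolP => [/x_inj ->|]; case: eqP => // ->.
have [|v wide] := @free_family_wide_combination D delta.
  move=> v /(congr1 (fun g => g (x _))) v0; apply/rowP => i'; rewrite mxE.
  have := v0 i'; rewrite (bigD1 i') //= delta_x eqxx mulr1 big1 ?addr0 // => i /negPf.
  by rewrite delta_x eq_sym => ->; rewrite mulr0.
exists (fun y => \sum_i v 0 i * delta i y); split=> // y; apply: contraNP => yNx.
rewrite big1 // => i _; rewrite /delta; case: asboolP => [yx|]; last by rewrite mulr0.
by case: yNx; exists i.
Qed.

End WideElements.

Lemma infinite_nat_injection (I : Type) : ~ finite_type I -> exists e : nat -> I, injective e.
Proof.
move=> I_inf; have fresh (s : seq {classic I}) : exists y, y \notin s.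
  apply: contrapT => /forallNP s_full; apply: I_inf; exists (size s), (tnth (in_tuple s)) => y.
  have ys : (y : {classic I}) \in s by apply: contrapT => /negP; apply: s_full.
  have yi : (index (y : {classic I}) s < size s)%N by rewrite index_mem.
  by exists (Ordinal yi); rewrite (tnth_nth y); exact: (@nth_index {classic I} y y s ys).
pose prefix n := iter n (fun s => xchoose (fresh s) :: s) [::].
pose e n : I := xchoose (fresh (prefix n)).
have e_prefix i n : (i < n)%N -> (e i : {classic I}) \in prefix n.
  elim: n => // n IH; rewrite ltnS leq_eqVlt => /orP[/eqP ->|/IH]; rewrite inE ?eqxx //.
  by move=> ->; rewrite orbT.
have e_fresh n : (e n : {classic I}) \notin prefix n := xchooseP (fresh (prefix n)).
exists e => i j eij; case: (ltngtP i j) => // [ij|ji].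
  by have := e_fresh j; rewrite -eij e_prefix.
by have := e_fresh i; rewrite eij e_prefix.
Qed.

Lemma no_bounded_basis_of_injection (K : fieldType) (I : Type) (e : nat -> I) :
  injective e -> forall B : (I -> K) -> Prop, is_basis B -> ~ bounded_basis B.
Proof.
move=> e_inj B [indB spanB] [k [_ boundB]].
pose P (n j : nat) := e (pickle (n, j)).
have P_inj n j n' j' : P n j = P n' j' -> (n, j) = (n', j') by move/e_inj/(pcan_inj pickleK).
pose block n y := `[< exists j, y = P n j >].
have block_uniq n n' y : block n y -> block n' y -> n = n'.
  by move=> /asboolP[j ->] /asboolP[j' /P_inj[]].
pose ind n : I -> K := fun y => (block n y)%:R.
have /choice[L LP] n := spanning_combine spanB (ind n).
pose D n := (k * n * size (L n)).+1.
have /choice[G GP] n : exists g : I -> K, (forall y, g y != 0 -> block n y) /\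
    forall l, on_basis B l -> combine l = g -> (D n <= size l)%N.
  have P_n_inj : injective (fun i : 'I_(D n) => P n i) by move=> i i' /P_inj[] /val_inj.
  have [g [g_supp g_wide]] := wide_element_on_points indB spanB P_n_inj.
  by exists g; split=> // y /g_supp[i ->]; apply/asboolP; exists i.
pose blk y := if pselect (exists n, block n y) is left h then xchoose h else 0%N.
have blkP n y : block n y -> blk y = n.
  move=> yn; rewrite /blk; case: pselect => [h|[]]; last by exists n.
  exact: block_uniq (xchooseP h) yn.
have [lr [lrB r_lr]] := spanning_combine spanB (fun y => G (blk y) y).
set m := size lr.
have r_ind : fmul (combine lr) (combine (L m)) = G m.
  rewrite -r_lr -(LP m).2; apply: funext => y; rewrite /fmul /ind.
  case: (boolP (block m y)) => [/blkP ->|ym]; first by rewrite mulr1.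
  by rewrite mulr0; apply/esym/eqP; apply: contraNT ym; apply: (GP m).1.
have [l [lB l_size l_G]] := k_bounded_fmul_combine spanB boundB lrB (LP m).1.
have := (GP m).2 l lB; rewrite -l_G r_ind => /(_ erefl) /leq_trans /(_ l_size).
by rewrite ltnn.
Qed.

Theorem theorem5p6 (K : fieldType) (I : Type) (hI : inhabited I) :
  (finite_type I ->
     exists B : (I -> K) -> Prop, is_basis B /\ strong_multiplicative B) /\
  (~ finite_type I ->
     forall B : (I -> K) -> Prop, is_basis B -> ~ bounded_basis B).
Proof.
split; first exact: finite_strong_multiplicative_basis.
by move=> /infinite_nat_injection[e e_inj]; apply: no_bounded_basis_of_injection e_inj.
Qed.
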